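(* Let $P$ be a rectangular box (brick) in $\mathbb{R}^3$ of volume $1$, all of whose edge lengths are at least $\frac{1}{\sqrt{2}}$. Let $e_1,e_2,e_3$ be three pairwise skew edges of $P$, and let $A\in e_1$, $B\in e_2$, $C\in e_3$ be the vertices of a triangle $ABC$. Then at least one side of the triangle $ABC$ has length at most $\sqrt{2}$.
   Context: A brick is a rectangular parallelepiped (box with pairwise orthogonal edge directions). Edges of the brick are its twelve closed edge segments. Three edges are pairwise skew if no two of them are parallel and no two intersect; in a brick such a triple consists of one edge from each of the three edge directions. ''The vertices of a triangle lie on the skew edges of the brick'' means each vertex lies on a different edge of such a triple. *)

From HB Require Import structures.
From mathcomp Require Import all_boot all_order all_algebra.
From mathcomp Require Import reals.
Set Implicit Arguments. Unset Strict Implicit. Unset Printing Implicit Defensive.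
Import Order.TTheory GRing.Theory Num.Theory.
Local Open Scope ring_scope.

Section Brick.
Variable R : realType.
Notation pt := 'rV[R]_3.

Definition dotp (x y : pt) : R := \sum_(k < 3) x ord0 k * y ord0 k.
Definition vnorm (x : pt) : R := Num.sqrt (dotp x x).
Definition dist (x y : pt) : R := vnorm (x - y).

(* A brick is given by a vertex O and three pairwise orthogonal edge vectors
   u 0, u 1, u 2; its points are O + sum_k t_k u_k with t_k in [0,1]. *)
Definition is_brick (u : 'I_3 -> pt) : Prop :=
  forall i j : 'I_3, i != j -> dotp (u i) (u j) = 0.

Definition brick_volume (u : 'I_3 -> pt) : R := \prod_(k < 3) vnorm (u k).

(* The edge in direction i whose other coordinates are fixed by s (s i is
   ignored): the closed segment { O + sum_k c_k u_k : c_i = t in [0,1],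
   c_k = s k (0 or 1) for k <> i }. *)
Definition on_edge (O : pt) (u : 'I_3 -> pt) (i : 'I_3) (s : 'I_3 -> bool)
    (X : pt) : Prop :=
  exists t : R, 0 <= t <= 1 /\
    X = O + \sum_(k < 3) (if k == i then t else (s k)%:R) *: u k.

Definition skew_edges (O : pt) (u : 'I_3 -> pt)
    (i : 'I_3) (s : 'I_3 -> bool) (j : 'I_3) (r : 'I_3 -> bool) : Prop :=
  i != j /\ ~ (exists X, on_edge O u i s X /\ on_edge O u j r X).

Definition collinear (A B C : pt) : Prop :=
  exists l m : R, (l != 0 \/ m != 0) /\ l *: (B - A) + m *: (C - A) = 0.

End Brick.

From HB Require Import structures.
From mathcomp Require Import all_boot all_order all_algebra.
From mathcomp Require Import reals.
From mathcomp Require Import ring lra.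
Import Order.TTheory GRing.Theory Num.Theory.
Local Open Scope ring_scope.

(* Write x, y, z for the squared edge lengths, so that x, y, z >= 1/2 and
   x y z = 1, and p, q, r in [0, 1] for the positions of A, B, C on their
   edges; the squared sides are convex quadratics in (p, q, r).  If all three
   exceeded 2, one could move (p, q, r) along a direction in which the three
   directional derivatives coincide, with the sign making them nonnegative,
   until a vertex of the triangle reaches an end of its edge, i.e. a vertex
   of the brick.  Up to the symmetries of the configuration this vertex is C,
   and optimising the positions of A and B then reduces the claim to
   polynomial inequalities in x, y, z. *)

(* Squared edge lengths of a brick of volume 1 with all edges >= 1/sqrt 2. *)
Definition fat_unit_brick {R : realFieldType} (x y z : R) : Prop :=
  [/\ 1/2 <= x, 1/2 <= y, 1/2 <= z & x * y * z = 1].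

Section VolumeInequalities.
Context {R : realFieldType} {x y z : R}.

Lemma fat_unit_brick_rotate : fat_unit_brick x y z -> fat_unit_brick y z x.
Proof. by case=> ? ? ? xyz1; split=> //; rewrite -xyz1; ring. Qed.

Lemma fat_unit_brick_swap : fat_unit_brick x y z -> fat_unit_brick y x z.
Proof. by case=> ? ? ? xyz1; split=> //; rewrite -xyz1; ring. Qed.

Lemma volume_not_ge2_sum_ge2 :
  fat_unit_brick x y z -> 2 <= x -> 2 <= y + z -> False.
Proof.
case=> _ y_ge z_ge xyz1 x_ge2 yz_ge2.
have : 0 <= (2 * y - 1) * (2 * z - 1) by apply: mulr_ge0; lra.
have : 0 <= (x - 2) * (y + z - 2) by apply: mulr_ge0; lra.
nra.
Qed.

Lemma volume_ge2_le_sub :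
  fat_unit_brick x y z -> 2 <= x -> y + z <= 2 -> x <= 4 * (2 - y - z).
Proof.
case=> _ y_ge z_ge xyz1 x_ge2 yz_le2.
have : 0 <= (2 * y - 1) * (2 * z - 1) by apply: mulr_ge0; lra.
nra.
Qed.

Lemma volume_sum_ge2_sqr_le : fat_unit_brick x y z ->
  2 <= y + z -> 2 - x <= y -> (y + z) ^+ 2 <= 4 * y * (2 - x).
Proof.
case=> x_ge y_ge z_ge xyz1 yz_ge2 xy_ge.
have z_gt0 : 0 < z by lra.
suff g_ge0 : 0 <= 8 * y * z - 4 - z * (y + z) ^+ 2.
  have : 0 <= z * (4 * y * (2 - x) - (y + z) ^+ 2) by nra.
  nra.
have y_le4 : y <= 4.
  have : 0 <= y * (4 * (x * z) - 1) by apply: mulr_ge0; nra.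
  nra.
have yz_le2 : y * z <= 2.
  have : 0 <= y * z * (2 * x - 1) by apply: mulr_ge0; [apply: mulr_ge0|]; lra.
  nra.
have k_ge0 : 0 <= y * y * z - 2 * y * z + 1.
  have : 0 <= y * z * (y - 2 + x) by apply: mulr_ge0; [apply: mulr_ge0|]; lra.
  nra.
have [z_le1|z_gt1] := lerP z 1.
  set h := y + z - 2; set w := 1 - z; set e := 2 * z - 1; set v := 4 - y.
  have [h0 w0 e0 v0] : [/\ 0 <= h, 0 <= w, 0 <= e & 0 <= v].
    by rewrite /h /w /e /v; split; lra.
  have -> : 8 * y * z - 4 - z * (y + z) ^+ 2 =
      (5 * (h * e) + 4 * (h * v) + 3 * (h * h * w) + h * w * e
       + 20 * (w * e) + h * e * v) / 5 by rewrite /h /w /e /v; field.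
  by rewrite divr_ge0 // !addr_ge0 ?mulr_ge0.
have y_ge1 : 1 <= y.
  have [//|y_lt1] := lerP 1 y.
  have y2y0 : 0 <= y * (2 - y) by apply: mulr_ge0; lra.
  have : y * (2 - y) * (2 - y) <= y * (2 - y) * z by apply: ler_wpM2l => //; lra.
  have : 0 < (1 - y) * (- (y * y - 3 * y + 1)) by apply: mulr_gt0; nra.
  nra.
set a := z - 1; set b := y - 1; set v := 2 - z; set h := 2 - y * z.
have [a0 b0 h0] : [/\ 0 <= a, 0 <= b & 0 <= h] by rewrite /a /b /h; split; lra.
have v0 : 0 <= v by rewrite /v; nra.
have -> : 8 * y * z - 4 - z * (y + z) ^+ 2 =
    3 * (a * b) + 3 * (a * v) + a * a * v + 3 * (y * y * z - 2 * y * z + 1)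
    + a * a * b + 3 * (a * b * h) + 4 * (b * h)
    + 3 * (a * (y * y * z - 2 * y * z + 1)) by rewrite /a /b /v /h; ring.
by rewrite !addr_ge0 ?mulr_ge0.
Qed.

Lemma volume_le2_le2_sqr_le : fat_unit_brick x y z ->
  x <= 2 -> y + z <= 2 -> 2 - x <= y -> x * (2 - y - z) <= 1 -> y * (2 - x) <= 1 ->
  (1 - x * (2 - y - z) - y * (2 - x)) ^+ 2 <= 4 * (x * (2 - y - z)) * (y * (2 - x)).
Proof.
case=> x_ge y_ge z_ge xyz1 x_le2 yz_le2 xy_ge U_le1 V_le1.
set U := x * (2 - y - z) in U_le1 *; set V := y * (2 - x) in V_le1 *.
have yU : y * U = 2 * x * y - x * y * y - 1 by rewrite /U; nra.
set a := 2 - x; set b := 2 * x * y - x * y * y - 1; set d := x + y - 2.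
set f := 2 * y - 1; set g := 2 - x * y; set h := y - b; set i := 1 - V.
have [a0 d0 f0 i0] : [/\ 0 <= a, 0 <= d, 0 <= f & 0 <= i].
  by rewrite /a /d /f /i; split; lra.
have b0 : 0 <= b by rewrite /b -yU; apply: mulr_ge0; [lra | rewrite /U; nra].
have g0 : 0 <= g.
  have : 0 <= x * y * (2 * z - 1) by apply: mulr_ge0; [apply: mulr_ge0|]; lra.
  rewrite /g; nra.
have h0 : 0 <= h.
  rewrite /h /b -yU.
  have : 0 <= y * (1 - U) by apply: mulr_ge0; lra.
  lra.
have y2_gt0 : 0 < y ^+ 2 by apply: exprn_gt0; lra.
rewrite -subr_ge0 -(pmulr_rge0 _ y2_gt0) -(pmulr_rge0 _ (ltr0n R 20)).
have -> : 20%:R * (y ^+ 2 * (4 * U * V - (1 - U - V) ^+ 2)) =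
    20 * (4 * (y * U) * (y * V) - (y - y * U - y * V) ^+ 2) by ring.
have -> : 20 * (4 * (y * U) * (y * V) - (y - y * U - y * V) ^+ 2) =
    2 * (d * f * g * y) + 10 * (a * b * d * y) + 4 * (a * b * d)
    + 4 * (a * d * i * y ^+ 2) + 4 * (a * b * f * x) + 4 * (a * d * g * y ^+ 2)
    + 8 * (a * f * i * y ^+ 2) + 28 * (a * b * f) + 4 * (f * g * i)
    + 12 * (f * h * i) + 18 * (d * g * h).
  rewrite yU /h /i /V /a /b /d /f /g; ring.
have [x0 y0] : 0 <= x /\ 0 <= y by split; lra.
by rewrite !addr_ge0 ?mulr_ge0 ?exprn_ge0.
Qed.

End VolumeInequalities.

Section Sqrt.
Context {R : rcfType}.
Implicit Types a b c w : R.

Lemma sqr_sub_sqrt a b : 0 <= a -> 0 <= b ->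
  (Num.sqrt a - Num.sqrt b) ^+ 2 = a + b - 2 * Num.sqrt (a * b).
Proof.
move=> a0 b0; rewrite sqrrB !sqr_sqrtr // sqrtrM //; ring.
Qed.

Lemma le_2sqrt a w : 0 <= a -> a ^+ 2 <= 4 * w -> a <= 2 * Num.sqrt w.
Proof.
move=> a0 aw; have w0 : 0 <= w by nra.
have := sqr_sqrtr w0; have := sqrtr_ge0 w; nra.
Qed.

Lemma sqrt_le_of_lt_sqr c b : 0 <= b -> c < b ^+ 2 -> Num.sqrt c <= b.
Proof.
move=> b0 cb; have [c0|c_gt0] := lerP c 0.
  by rewrite ler0_sqrtr.
by rewrite -(ger0_norm b0) -sqrtr_sqr ler_sqrt ?sqr_ge0 ?ltW.
Qed.

Lemma sqrt_add_ge1 a b : 0 <= a -> 0 <= b ->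
  (a <= 1 -> b <= 1 -> (1 - a - b) ^+ 2 <= 4 * a * b) ->
  1 <= Num.sqrt a + Num.sqrt b.
Proof.
move=> a0 b0 ab.
have [sa0 sb0] := (sqrtr_ge0 a, sqrtr_ge0 b).
have [a_ge1|a_lt1] := lerP 1 a.
  have : 1 <= Num.sqrt a by rewrite -sqrtr1 ler_sqrt.
  lra.
have [b_ge1|b_lt1] := lerP 1 b.
  have : 1 <= Num.sqrt b by rewrite -sqrtr1 ler_sqrt.
  lra.
have key : 1 - a - b <= 2 * Num.sqrt (a * b).
  have [|pos] := lerP (1 - a - b) 0; first by have := sqrtr_ge0 (a * b); lra.
  by apply: le_2sqrt; rewrite ?mulrA ?ab ?ltW.
move: key; rewrite sqrtrM //.
have := sqr_sqrtr a0; have := sqr_sqrtr b0; nra.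
Qed.

End Sqrt.

Lemma corner_sqr_dist_le2 {R : rcfType} (x y z : R) :
  fat_unit_brick x y z -> 2 - x <= y ->
  (Num.sqrt x - Num.sqrt (2 - y - z)) ^+ 2
    + (Num.sqrt y - Num.sqrt (2 - x)) ^+ 2 + z <= 2.
Proof.
move=> fat xy_ge; have [x_ge y_ge z_ge _] := fat.
have [x_le2|x_gt2] := lerP x 2; have [yz_le2|yz_gt2] := lerP (y + z) 2.
- rewrite !sqr_sub_sqrt; try lra.
  have : 1 <= Num.sqrt (x * (2 - y - z)) + Num.sqrt (y * (2 - x)).
    apply: sqrt_add_ge1; try by apply: mulr_ge0; lra.
    exact: volume_le2_le2_sqr_le.
  lra.
- rewrite (ler0_sqrtr (_ : 2 - y - z <= 0)); last lra.
  rewrite subr0 sqr_sub_sqrt; try lra.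
  have : y + z <= 2 * Num.sqrt (y * (2 - x)).
    apply: le_2sqrt; first lra.
    by rewrite mulrA; apply: volume_sum_ge2_sqr_le => //; lra.
  have := sqr_sqrtr (_ : 0 <= x); lra.
- rewrite (ler0_sqrtr (_ : 2 - x <= 0)); last lra.
  rewrite subr0 sqr_sub_sqrt; try lra.
  have : x <= 2 * Num.sqrt (x * (2 - y - z)).
    apply: le_2sqrt; first lra.
    have := volume_ge2_le_sub fat (ltW x_gt2) yz_le2; nra.
  have := sqr_sqrtr (_ : 0 <= y); lra.
- by have := volume_not_ge2_sum_ge2 fat (ltW x_gt2) (ltW yz_gt2).
Qed.

Definition unit_end {R : numDomainType} (t : R) : bool := (t == 0) || (t == 1).

Section UnitCube.
Context {R : realFieldType}.
Implicit Types p q r d t k : R.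

Lemma unit_interior t : 0 <= t <= 1 -> ~~ unit_end t -> 0 < t < 1.
Proof.
case/andP=> t0 t1; rewrite negb_or => /andP[tn0 tn1].
by rewrite !lt_neqAle eq_sym tn0 tn1 t0 t1.
Qed.

Lemma unit_end_in01 t : unit_end t -> 0 <= t <= 1.
Proof. by case/orP=> /eqP ->; rewrite lexx ler01. Qed.

Lemma segment_exit p d : 0 <= p <= 1 -> d != 0 ->
  exists2 t, 0 <= t & unit_end (p + t * d).
Proof.
case/andP=> p0 p1 d_neq0; rewrite /unit_end.
have [d_lt0|d_gt0|d_eq0] := ltgtP d 0; last by rewrite d_eq0 eqxx in d_neq0.
- exists (- (p / d)); first by rewrite oppr_ge0 mulr_ge0_le0 // invr_le0 ltW.
  by rewrite mulNr divfK // subrr eqxx.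
- exists ((1 - p) / d); first by apply: divr_ge0; lra.
  by rewrite divfK // addrC subrK eqxx orbT.
Qed.

Lemma in01_segment p d t k : 0 <= p <= 1 -> 0 <= p + t * d <= 1 ->
  0 <= k <= t -> 0 <= p + k * d <= 1.
Proof.
case/andP=> p0 p1 /andP[pt0 pt1] /andP[k0 kt].
have [d0|d0] := lerP 0 d.
  have : k * d <= t * d by apply: ler_wpM2r.
  have : 0 <= k * d by apply: mulr_ge0.
  by move=> *; apply/andP; split; lra.
have : t * d <= k * d by apply: ler_wnM2r; lra.
have : k * d <= 0 by apply: mulr_ge0_le0; lra.
by move=> *; apply/andP; split; lra.
Qed.

Lemma cube_exit p q r d1 d2 d3 :
  0 <= p <= 1 -> 0 <= q <= 1 -> 0 <= r <= 1 ->
  d1 != 0 -> d2 != 0 -> d3 != 0 ->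
  exists2 k, 0 <= k &
    [/\ 0 <= p + k * d1 <= 1, 0 <= q + k * d2 <= 1, 0 <= r + k * d3 <= 1 &
        [|| unit_end (p + k * d1), unit_end (q + k * d2) | unit_end (r + k * d3)]].
Proof.
move=> hp hq hr nd1 nd2 nd3.
have [t1 t1_ge0 e1] := segment_exit _ _ hp nd1.
have [t2 t2_ge0 e2] := segment_exit _ _ hq nd2.
have [t3 t3_ge0 e3] := segment_exit _ _ hr nd3.
pose k := Num.min t1 (Num.min t2 t3).
have k_ge0 : 0 <= k by rewrite !le_min t1_ge0 t2_ge0 t3_ge0.
have [k1 k2 k3] : [/\ k <= t1, k <= t2 & k <= t3] by rewrite !ge_min !lexx ?orbT.
exists k => //; split.
- by apply: (in01_segment _ _ _ _ hp (unit_end_in01 _ e1)); rewrite k_ge0 k1.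
- by apply: (in01_segment _ _ _ _ hq (unit_end_in01 _ e2)); rewrite k_ge0 k2.
- by apply: (in01_segment _ _ _ _ hr (unit_end_in01 _ e3)); rewrite k_ge0 k3.
have [->|[->|->]] : k = t1 \/ k = t2 \/ k = t3.
  by rewrite /k !minElt; repeat case: ifP => _; auto.
- by rewrite e1.
- by rewrite e2 orbT.
- by rewrite e3 !orbT.
Qed.

End UnitCube.

(* With x, y, z the squared edge lengths, and p, q, r the distances (in units
   of edge length) of A from the face through e2, of B from the face through
   e1 and of C from the face through e2, the conjuncts say that AB, BC and CA
   all exceed sqrt 2. *)
Definition sides_long {R : realFieldType} (x y z p q r : R) : Prop :=
  [/\ 2 < p ^+ 2 * x + q ^+ 2 * y + z,
      2 < x + (1 - q) ^+ 2 * y + r ^+ 2 * z &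
      2 < (1 - p) ^+ 2 * x + y + (1 - r) ^+ 2 * z].

Section SidesLong.
Context {R : realFieldType}.
Implicit Types x y z p q r : R.

Lemma sides_long_rotate x y z p q r :
  sides_long x y z p q r -> sides_long y z x (1 - q) r (1 - p).
Proof. by case=> ? ? ?; split; lra. Qed.

Lemma sides_long_swap x y z p q r :
  sides_long x y z p q r -> sides_long y x z q p (1 - r).
Proof. by case=> ? ? ?; split; lra. Qed.

Lemma sides_long_shift x y z p q r v1 v2 v3 :
  0 <= x -> 0 <= y -> 0 <= z ->
  0 <= p * x * v1 + q * y * v2 ->
  0 <= r * z * v3 - (1 - q) * y * v2 ->
  0 <= - ((1 - p) * x * v1 + (1 - r) * z * v3) ->
  sides_long x y z p q r -> sides_long x y z (p + v1) (q + v2) (r + v3).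
Proof.
move=> x0 y0 z0 d1 d2 d3 [h1 h2 h3].
have [s1 s2 s3] : [/\ 0 <= v1 ^+ 2 * x, 0 <= v2 ^+ 2 * y & 0 <= v3 ^+ 2 * z].
  by split; apply: mulr_ge0; rewrite ?sqr_ge0.
split.
- have -> : (p + v1) ^+ 2 * x + (q + v2) ^+ 2 * y + z = p ^+ 2 * x + q ^+ 2 * y + z
    + 2 * (p * x * v1 + q * y * v2) + v1 ^+ 2 * x + v2 ^+ 2 * y by ring.
  lra.
- have -> : x + (1 - (q + v2)) ^+ 2 * y + (r + v3) ^+ 2 * z
    = x + (1 - q) ^+ 2 * y + r ^+ 2 * z
    + 2 * (r * z * v3 - (1 - q) * y * v2) + v2 ^+ 2 * y + v3 ^+ 2 * z by ring.
  lra.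
- have -> : (1 - (p + v1)) ^+ 2 * x + y + (1 - (r + v3)) ^+ 2 * z
    = (1 - p) ^+ 2 * x + y + (1 - r) ^+ 2 * z
    - 2 * ((1 - p) * x * v1 + (1 - r) * z * v3) + v1 ^+ 2 * x + v3 ^+ 2 * z by ring.
  lra.
Qed.

Lemma sides_long_push x y z p q r : 0 < x -> 0 < y -> 0 < z ->
  0 < p < 1 -> 0 < q < 1 -> 0 < r < 1 -> sides_long x y z p q r ->
  exists p' q' r', [/\ 0 <= p' <= 1, 0 <= q' <= 1, 0 <= r' <= 1,
    [|| unit_end p', unit_end q' | unit_end r'] & sides_long x y z p' q' r'].
Proof.
move=> x0 y0 z0 /andP[p0 p1] /andP[q0 q1] /andP[r0 r1] long.
pose a : R := (1 - q) * (1 - r) + q; pose b := (1 - p) * r + p.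
pose c := 1 - p + p * (1 - q).
(* Along (a y z, - b x z, - c x y) the derivatives of the three squared sides
   all equal 2 x y z delta. *)
pose delta := p * (1 - q) * (1 - r) - (1 - p) * q * r.
pose sgn : R := if 0 <= delta then 1 else -1.
have sgn_delta : 0 <= sgn * delta by rewrite /sgn; case: ifP => /= ?; lra.
have sgn_neq0 : sgn != 0 by rewrite /sgn; case: ifP => _; rewrite ?oppr_eq0 oner_eq0.
have [a0 b0 c0] : [/\ 0 < a, 0 < b & 0 < c] by rewrite /a /b /c; split; nra.
pose d1 := sgn * (a * y * z); pose d2 := - (sgn * (b * x * z)).
pose d3 := - (sgn * (c * x * y)).
have [nd1 nd2 nd3] : [/\ d1 != 0, d2 != 0 & d3 != 0].
  by rewrite /d1 /d2 /d3 !oppr_eq0 !mulf_neq0 // gt_eqF.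
have in01 (t : R) : 0 < t -> t < 1 -> 0 <= t <= 1 by move=> *; apply/andP; split; lra.
have [k k0 [hp hq hr ends]] := cube_exit _ _ _ _ _ _
  (in01 _ p0 p1) (in01 _ q0 q1) (in01 _ r0 r1) nd1 nd2 nd3.
exists (p + k * d1), (q + k * d2), (r + k * d3); split => //.
set slope := k * (sgn * delta) * (x * y * z).
have slope0 : 0 <= slope.
  have : 0 < x * y * z by do 2 apply: mulr_gt0 => //.
  by move/ltW; apply: mulr_ge0; apply: mulr_ge0.
apply: sides_long_shift => //; try exact: ltW.
- suff -> : p * x * (k * d1) + q * y * (k * d2) = slope by [].
  by rewrite /slope /d1 /d2 /a /b /delta; ring.
- suff -> : r * z * (k * d3) - (1 - q) * y * (k * d2) = slope by [].
  by rewrite /slope /d2 /d3 /b /c /delta; ring.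
- suff -> : - ((1 - p) * x * (k * d1) + (1 - r) * z * (k * d3)) = slope by [].
  by rewrite /slope /d1 /d3 /a /c /delta; ring.
Qed.

End SidesLong.

Section NoLongTriangle.
Context {R : rcfType}.
Implicit Types x y z p q r : R.

Lemma sides_long_vertex x y z p q : fat_unit_brick x y z ->
  0 <= p <= 1 -> 0 <= q <= 1 -> ~ sides_long x y z p q 0.
Proof.
move=> fat /andP[p0 p1] /andP[q0 q1] [longAB longBC longCA].
have [x_ge y_ge z_ge _] := fat.
have aa : Num.sqrt x ^+ 2 = x by rewrite sqr_sqrtr //; lra.
have bb : Num.sqrt y ^+ 2 = y by rewrite sqr_sqrtr //; lra.
have [a0 b0] := (sqrtr_ge0 x, sqrtr_ge0 y).
set a := Num.sqrt x in a0 aa *; set b := Num.sqrt y in b0 bb *.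
(* CA and BC bound (1 - p) a and (1 - q) b from below; AB is largest when
   both bounds are attained. *)
have m_le : Num.sqrt (2 - y - z) <= (1 - p) * a.
  by apply: sqrt_le_of_lt_sqr; [nra | rewrite exprMn aa; lra].
have n_le : Num.sqrt (2 - x) <= (1 - q) * b.
  by apply: sqrt_le_of_lt_sqr; [nra | rewrite exprMn bb; lra].
have xy_ge : 2 - x <= y.
  have : 0 <= q * (2 - q) * y by apply: mulr_ge0; [apply: mulr_ge0|]; lra.
  lra.
have sqr_le (u v : R) : 0 <= u -> u <= v -> u ^+ 2 <= v ^+ 2 by move=> *; nra.
have pa : (p * a) ^+ 2 <= (a - Num.sqrt (2 - y - z)) ^+ 2.
  by apply: sqr_le; [exact: mulr_ge0 | lra].
have qb : (q * b) ^+ 2 <= (b - Num.sqrt (2 - x)) ^+ 2.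
  by apply: sqr_le; [exact: mulr_ge0 | lra].
have := corner_sqr_dist_le2 _ _ _ fat xy_ge.
by move: pa qb; rewrite -/a -/b !exprMn aa bb; lra.
Qed.

Lemma sides_long_unit_end x y z p q r : fat_unit_brick x y z ->
  0 <= p <= 1 -> 0 <= q <= 1 -> 0 <= r <= 1 ->
  [|| unit_end p, unit_end q | unit_end r] -> ~ sides_long x y z p q r.
Proof.
have flip (t : R) : 0 <= t <= 1 -> 0 <= 1 - t <= 1.
  by case/andP=> *; apply/andP; split; lra.
have p_eq1 x' y' z' q' r' : fat_unit_brick x' y' z' -> 0 <= q' <= 1 -> 0 <= r' <= 1 ->
    ~ sides_long x' y' z' 1 q' r'.
  move=> fat hq hr /sides_long_rotate; rewrite subrr.
  exact: sides_long_vertex (fat_unit_brick_rotate fat) (flip _ hq) hr.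
have q_eq0 x' y' z' p' r' : fat_unit_brick x' y' z' -> 0 <= p' <= 1 -> 0 <= r' <= 1 ->
    ~ sides_long x' y' z' p' 0 r'.
  move=> fat hp hr /sides_long_rotate; rewrite subr0.
  exact: p_eq1 (fat_unit_brick_rotate fat) hr (flip _ hp).
move=> fat hp hq hr ends long.
have fat' := fat_unit_brick_swap fat; move: (long) => /sides_long_swap long'.
case/or3P: ends => /orP[] /eqP e; rewrite e in hp hq hr long long'.
- exact: q_eq0 fat' hq (flip _ hr) long'.
- exact: p_eq1 fat hq hr long.
- exact: q_eq0 fat hp hr long.
- exact: p_eq1 fat' hp (flip _ hr) long'.
- exact: sides_long_vertex fat hp hq long.
- by move: long'; rewrite subrr; apply: sides_long_vertex fat' hq hp.
Qed.

Theorem not_sides_long x y z p q r : fat_unit_brick x y z ->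
  0 <= p <= 1 -> 0 <= q <= 1 -> 0 <= r <= 1 -> ~ sides_long x y z p q r.
Proof.
move=> fat hp hq hr long.
have [ends|inner] := boolP [|| unit_end p, unit_end q | unit_end r].
  exact: sides_long_unit_end fat hp hq hr ends long.
case/norP: inner => np /norP[nq nr].
have [x0 y0 z0] : [/\ 0 < x, 0 < y & 0 < z] by case: fat => *; split; lra.
have [p' [q' [r' [hp' hq' hr' ends' long']]]] := sides_long_push _ _ _ _ _ _ x0 y0 z0
  (unit_interior _ hp np) (unit_interior _ hq nq) (unit_interior _ hr nr) long.
exact: sides_long_unit_end fat hp' hq' hr' ends' long'.
Qed.

End NoLongTriangle.

Lemma ord3_cover (i j k m : 'I_3) :
  i != j -> j != k -> i != k -> m \in [:: i; j; k].
Proof.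
by case: i => [[|[|[|?]]] ?] //; case: j => [[|[|[|?]]] ?] //;
   case: k => [[|[|[|?]]] ?] //; case: m => [[|[|[|?]]] ?].
Qed.

Lemma big_ord3_distinct {T : Type} {idx : T} (op : Monoid.com_law idx)
    (F : 'I_3 -> T) {i j k : 'I_3} : i != j -> j != k -> i != k ->
  \big[op/idx]_(m < 3) F m = op (op (F i) (F j)) (F k).
Proof.
move=> ij jk ik.
have ijk : perm_eq (index_enum 'I_3) [:: i; j; k].
  apply: uniq_perm; first exact: index_enum_uniq.
    by rewrite /= !inE negb_or ij ik jk.
  by move=> m; rewrite mem_index_enum ord3_cover.
by rewrite (perm_big _ ijk) !big_cons big_nil Monoid.mulm1 Monoid.mulmA.
Qed.

Section BrickGeometry.
Context {R : realType}.
Implicit Types (O X Y : 'rV[R]_3) (u : 'I_3 -> 'rV[R]_3).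

Lemma dotpC X Y : dotp X Y = dotp Y X.
Proof. by apply: eq_bigr => k _; rewrite mulrC. Qed.

Lemma dotpZl (a : R) X Y : dotp (a *: X) Y = a * dotp X Y.
Proof. by rewrite /dotp mulr_sumr; apply: eq_bigr => k _; rewrite mxE mulrA. Qed.

Lemma dotp_suml (F : 'I_3 -> 'rV[R]_3) Y :
  dotp (\sum_k F k) Y = \sum_k dotp (F k) Y.
Proof.
rewrite /dotp; under eq_bigr do rewrite summxE mulr_suml.
exact: exchange_big.
Qed.

Lemma dotp_brick u (c d : 'I_3 -> R) : is_brick u ->
  dotp (\sum_k c k *: u k) (\sum_k d k *: u k) = \sum_k c k * d k * dotp (u k) (u k).
Proof.
move=> brick; rewrite dotp_suml; apply: eq_bigr => k _.
rewrite dotpZl (dotpC (u k)) dotp_suml (bigD1 k) //= big1 ?addr0.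
  by rewrite dotpZl mulrA [c k * _]mulrC.
by move=> m mk; rewrite dotpZl brick ?mulr0.
Qed.

Lemma sub_brick_points O u (c d : 'I_3 -> R) :
  (O + \sum_k c k *: u k) - (O + \sum_k d k *: u k) = \sum_k (c k - d k) *: u k.
Proof.
rewrite opprD addrACA subrr add0r -sumrB.
by apply: eq_bigr => k _; rewrite scalerBl.
Qed.

Lemma sqr_vnorm X : vnorm X ^+ 2 = dotp X X.
Proof. by rewrite sqr_sqrtr // sumr_ge0 // => k _; rewrite -expr2 sqr_ge0. Qed.

Lemma bool_in01 (b : bool) : 0 <= (b%:R : R) <= 1.
Proof. by case: b; rewrite /= ?lexx ?ler01. Qed.

Lemma skew_edges_opposite {O u i s j r k} :
  skew_edges O u i s j r -> k != i -> k != j -> r k = ~~ s k.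
Proof.
move=> [ij disjoint] ki kj.
suff : r k != s k by case: (r k); case: (s k).
apply/negP => /eqP rs; apply: disjoint.
pose c m := if m == i then ((r i)%:R : R) else (s m)%:R.
exists (O + \sum_m c m *: u m); split; first by exists (r i)%:R; rewrite bool_in01.
exists (s j)%:R; split; first exact: bool_in01.
congr (O + _); apply: eq_bigr => m _; rewrite /c.
have [->|mi] := eqVneq m i; first by rewrite (negbTE ij).
have [->|mj] := eqVneq m j; first by [].
have : m \in [:: i; j; k] by apply: ord3_cover => //; rewrite eq_sym.
by rewrite !inE (negbTE mi) (negbTE mj) => /eqP ->; rewrite rs.
Qed.

Lemma fat_unit_brick_edges {u} {i1 i2 i3 : 'I_3} :
  i1 != i2 -> i2 != i3 -> i1 != i3 ->
  (forall k, 1 / Num.sqrt 2 <= vnorm (u k)) -> brick_volume u = 1 ->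
  fat_unit_brick (dotp (u i1) (u i1)) (dotp (u i2) (u i2)) (dotp (u i3) (u i3)).
Proof.
move=> d12 d23 d13 long vol.
have half_le k : 1 / 2 <= dotp (u k) (u k).
  rewrite -sqr_vnorm -[1 / 2](_ : (1 / Num.sqrt 2) ^+ 2 = 1 / 2 :> R).
    by rewrite lerXn2r // nnegrE ?divr_ge0 ?sqrtr_ge0.
  by rewrite expr_div_n expr1n sqr_sqrtr ?ler0n.
split; rewrite ?half_le // -!sqr_vnorm -!exprMn.
move: vol; rewrite /brick_volume (big_ord3_distinct _ _ d12 d23 d13) => ->.
by rewrite expr1n.
Qed.

Lemma sqr_brick_vec u (c : 'I_3 -> R) {i1 i2 i3 : 'I_3} :
  is_brick u -> i1 != i2 -> i2 != i3 -> i1 != i3 ->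
  dotp (\sum_k c k *: u k) (\sum_k c k *: u k) = c i1 ^+ 2 * dotp (u i1) (u i1)
    + c i2 ^+ 2 * dotp (u i2) (u i2) + c i3 ^+ 2 * dotp (u i3) (u i3).
Proof.
move=> brick d12 d23 d13.
by rewrite dotp_brick // (big_ord3_distinct _ _ d12 d23 d13) -!expr2.
Qed.

Lemma skew_triangle_sides_long {O u i1 i2 i3 s1 s2 s3 A B C} :
  is_brick u -> skew_edges O u i1 s1 i2 s2 -> skew_edges O u i2 s2 i3 s3 ->
  skew_edges O u i1 s1 i3 s3 ->
  on_edge O u i1 s1 A -> on_edge O u i2 s2 B -> on_edge O u i3 s3 C ->
  2 < dotp (A - B) (A - B) -> 2 < dotp (B - C) (B - C) -> 2 < dotp (C - A) (C - A) ->
  exists p q r, [/\ 0 <= p <= 1, 0 <= q <= 1, 0 <= r <= 1 &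
    sides_long (dotp (u i1) (u i1)) (dotp (u i2) (u i2)) (dotp (u i3) (u i3)) p q r].
Proof.
move=> brick sk12 sk23 sk13 [t1 [ht1 ->]] [t2 [ht2 ->]] [t3 [ht3 ->]].
have [d12 _] := sk12; have [d23 _] := sk23; have [d13 _] := sk13.
have [d21 d32 d31] : [/\ i2 != i1, i3 != i2 & i3 != i1] by rewrite !(eq_sym i3) eq_sym.
rewrite !sub_brick_points !(sqr_brick_vec _ _ brick d12 d23 d13) !eqxx.
rewrite (negbTE d12) (negbTE d23) (negbTE d13) (negbTE d21) (negbTE d32) (negbTE d31).
rewrite (skew_edges_opposite sk12 d31 d32) (skew_edges_opposite sk23 d12 d13).
rewrite (skew_edges_opposite sk13 d21 d23) => hAB hBC hCA.
exists (if s2 i1 then 1 - t1 else t1), (if s1 i2 then 1 - t2 else t2).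
exists (if s1 i3 then t3 else 1 - t3).
case/andP: ht1 => ? ?; case/andP: ht2 => ? ?; case/andP: ht3 => ? ?.
move: hAB hBC hCA; case: (s2 i1); case: (s1 i2); case: (s1 i3) => /= hAB hBC hCA;
  by split; first [apply/andP; split; lra | split; lra].
Qed.

End BrickGeometry.

Theorem mainTheorem1 (R : realType) (O : 'rV[R]_3) (u : 'I_3 -> 'rV[R]_3)
  (i1 i2 i3 : 'I_3) (s1 s2 s3 : 'I_3 -> bool) (A B C : 'rV[R]_3) :
  is_brick u ->
  brick_volume u = 1 ->
  (forall k : 'I_3, 1 / Num.sqrt 2 <= vnorm (u k)) ->
  skew_edges O u i1 s1 i2 s2 ->
  skew_edges O u i2 s2 i3 s3 ->
  skew_edges O u i1 s1 i3 s3 ->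
  on_edge O u i1 s1 A -> on_edge O u i2 s2 B -> on_edge O u i3 s3 C ->
  ~ collinear A B C ->
  dist A B <= Num.sqrt 2 \/ dist B C <= Num.sqrt 2 \/ dist C A <= Num.sqrt 2.
Proof.
move=> brick vol edges sk12 sk23 sk13 onA onB onC _.
have [[d12 _] [d23 _] [d13 _]] := And3 sk12 sk23 sk13.
rewrite /dist /vnorm !ler_sqrt ?ler0n //.
have [|hAB] := lerP (dotp (A - B) (A - B)) 2; first by left.
have [|hBC] := lerP (dotp (B - C) (B - C)) 2; first by right; left.
have [|hCA] := lerP (dotp (C - A) (C - A)) 2; first by right; right.
have [p [q [r [hp hq hr long]]]] :=
  skew_triangle_sides_long brick sk12 sk23 sk13 onA onB onC hAB hBC hCA.
exfalso; exact: not_sides_long (fat_unit_brick_edges d12 d23 d13 edges vol) hp hq hr long.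
Qed.
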